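(* Every simple binary matroid has a unique minimal tropical basis.
   Context: A matroid $M=([n],\mathscr C)$ is given by its circuit set $\mathscr C$. It is simple if every circuit has cardinality greater than $2$, and binary if it is representable over $\mathbb F_2$. Let ${\bf TP}^{n-1}$ be the tropical projective space over the tropical semifield $(\mathbb R\cup\{-\infty\},\max,+)$. For a circuit $C$, $V(C)$ is the set of points $x\in{\bf TP}^{n-1}$ such that the maximum of $\{x_i : i\in C\}$ is attained at least twice. For $B\subseteq\mathscr C$, set $V(B)=\bigcap_{C\in B}V(C)$. The Bergman fan of $M$ is $V(\mathscr C)$. A subset $B\subseteq\mathscr C$ is a tropical basis if $V(B)=V(\mathscr C)$. A tropical basis is minimal if no proper subset of it is a tropical basis. *)

From HB Require Import structures.
From mathcomp Require Import all_boot all_order all_algebra.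
From mathcomp Require Import reals.
Set Implicit Arguments. Unset Strict Implicit. Unset Printing Implicit Defensive.
Import Order.TTheory GRing.Theory Num.Theory.
Local Open Scope ring_scope.

Definition matroid_circuits (n : nat) (Cs : {set {set 'I_n}}) : Prop :=
  [/\ set0 \notin Cs,
      (forall C1 C2, C1 \in Cs -> C2 \in Cs -> C1 \subset C2 -> C1 = C2) &
      (forall C1 C2 e, C1 \in Cs -> C2 \in Cs -> C1 != C2 ->
         e \in C1 :&: C2 -> exists2 C3, C3 \in Cs & C3 \subset (C1 :|: C2) :\ e)].

Definition col_dependent (m n : nat) (A : 'M['F_2]_(m, n)) (S : {set 'I_n}) : bool :=
  [exists c : 'cV['F_2]_n,
     [&& c != 0, [forall i, (c i 0 != 0) ==> (i \in S)] & A *m c == 0]].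

Definition col_circuits (m n : nat) (A : 'M['F_2]_(m, n)) : {set {set 'I_n}} :=
  [set S | minset (col_dependent A) S].

Definition binary (n : nat) (Cs : {set {set 'I_n}}) : Prop :=
  exists m (A : 'M['F_2]_(m, n)), Cs = col_circuits A.

Definition simple (n : nat) (Cs : {set {set 'I_n}}) : Prop :=
  forall C, C \in Cs -> (2 < #|C|)%N.

(* Tropical semifield R ∪ {-oo}: None stands for -oo. *)
Definition trop_le (R : realType) (a b : option R) : bool :=
  match a, b with
  | None, _ => true
  | Some _, None => false
  | Some x, Some y => x <= y
  end.

(* Representatives of points of TP^{n-1}: vectors not identically -oo.
   (All sets V(_) below are invariant under adding a real constant, so they
   are described on representatives.) *)
Definition TP_point (R : realType) (n : nat) (x : 'I_n -> option R) : Prop :=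
  exists i, x i != None.

Definition in_V (R : realType) (n : nat) (C : {set 'I_n}) (x : 'I_n -> option R) : Prop :=
  exists i j, [/\ i \in C, j \in C, i != j, x i = x j &
                  forall k, k \in C -> trop_le (x k) (x i)].

Definition in_VB (R : realType) (n : nat) (B : {set {set 'I_n}}) (x : 'I_n -> option R) : Prop :=
  forall C, C \in B -> in_V C x.

Definition tropical_basis (R : realType) (n : nat) (Cs B : {set {set 'I_n}}) : Prop :=
  B \subset Cs /\
  (forall x : 'I_n -> option R, TP_point x -> (in_VB B x <-> in_VB Cs x)).

Definition minimal_tropical_basis (R : realType) (n : nat) (Cs B : {set {set 'I_n}}) : Prop :=
  tropical_basis R Cs B /\ (forall B' : {set {set 'I_n}}, B' \proper B -> ~ tropical_basis R Cs B').

From mathcomp Require Import all_boot all_order all_algebra.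
From mathcomp Require Import reals.
From mathcomp Require Import zify.
From Stdlib Require Import Classical.
Set Implicit Arguments. Unset Strict Implicit. Unset Printing Implicit Defensive.
Import Order.TTheory GRing.Theory Num.Theory.
Local Open Scope ring_scope.

(* A circuit C is essential if no circuit D has exactly one element outside C.
   Every tropical basis contains the essential circuits: for C essential, the
   point equal to 1 at some e in C, to 0 on the rest of C and to 2 off C lies
   in V(D) for every circuit D other than C, since D has at least two elements
   outside C, but not in V(C).  Conversely the essential circuits form a
   tropical basis: if x attains its maximum over a circuit C only once and
   D \ C = {f}, then, the matroid being binary, the symmetric difference
   (C \ D) + f is a circuit, x attains its maximum only once on D or on it,
   and simplicity makes both strictly smaller than C.  Induction on |C| ends at
   an essential circuit. *)

Lemma F2_natr_neq0 (a : 'F_2) : a = (a != 0)%:R.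
Proof. by case: a => [[|[|k]] lt_k2] //; apply/val_inj. Qed.

Lemma F2_natrD (a b : bool) : (a%:R + b%:R : 'F_2) = (a (+) b)%:R.
Proof. by case: a; case: b => //; apply/val_inj. Qed.

Section ColumnMatroid.
Variables (m n : nat) (A : 'M['F_2]_(m, n)).
Implicit Types S T C D : {set 'I_n}.

Definition indicator_cV S : 'cV['F_2]_n := \col_i (i \in S)%:R.

Lemma indicator_cVD S T :
  indicator_cV S + indicator_cV T = indicator_cV ((S :\: T) :|: (T :\: S)).
Proof.
by apply/matrixP => i j; rewrite !mxE F2_natrD !inE; case: (i \in S); case: (i \in T).
Qed.

Lemma indicator_cV_support (c : 'cV['F_2]_n) : c = indicator_cV [set i | c i 0 != 0].
Proof. by apply/matrixP => i j; rewrite !mxE inE (ord1 j) -F2_natr_neq0. Qed.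

Lemma indicator_cV_eq0 S : (indicator_cV S == 0) = (S == set0).
Proof.
apply/eqP/eqP => [/matrixP S0 | ->]; last by apply/matrixP => i j; rewrite !mxE inE.
apply/setP => i; have := S0 i 0; rewrite !mxE inE.
by case: (i \in S) => //= /eqP; rewrite oner_eq0.
Qed.

Lemma col_dependentP S :
  reflect (exists T, [/\ T != set0, T \subset S & A *m indicator_cV T = 0])
          (col_dependent A S).
Proof.
apply: (iffP existsP) => [[c /and3P [c0 /forall_inP cS /eqP Ac]] | [T [T0 TS AT]]].
  exists [set i | c i 0 != 0]; rewrite -indicator_cV_eq0 -(indicator_cV_support c).
  by split=> //; apply/subsetP => i; rewrite inE => /cS.
exists (indicator_cV T); rewrite indicator_cV_eq0 T0 AT eqxx andbT /=.
apply/forall_inP => i; rewrite mxE.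
by case: (boolP (i \in T)) => [/(subsetP TS) | _]; rewrite ?eqxx.
Qed.

Lemma col_dependent_kernel S :
  S != set0 -> A *m indicator_cV S = 0 -> col_dependent A S.
Proof. by move=> S0 AS; apply/col_dependentP; exists S. Qed.

Lemma col_dependentS T S : T \subset S -> col_dependent A T -> col_dependent A S.
Proof.
move=> TS /col_dependentP [U [U0 UT AU]]; apply/col_dependentP.
by exists U; split=> //; apply: subset_trans TS.
Qed.

Lemma col_circuit_kernel C : C \in col_circuits A -> A *m indicator_cV C = 0.
Proof.
rewrite inE => minC; have /col_dependentP [T [T0 TC AT]] := minsetp minC.
by rewrite -(minsetinf minC (col_dependent_kernel T0 AT) TC).
Qed.

Lemma col_circuit_proper_indep C T :
  C \in col_circuits A -> T \proper C -> ~~ col_dependent A T.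
Proof.
rewrite inE => minC /andP [TC CT]; apply/negP => depT.
by move: CT; rewrite (minsetinf minC depT TC) subxx.
Qed.

(* A dependent U inside S must contain f, and then S :\: U is a kernel support
   inside S :\ f, hence empty. *)
Lemma col_circuit_of_kernel S f :
  f \in S -> A *m indicator_cV S = 0 -> ~~ col_dependent A (S :\ f) ->
  S \in col_circuits A.
Proof.
move=> fS AS indepSf; rewrite inE; apply/minsetP; split.
  by apply: col_dependent_kernel => //; apply/set0Pn; exists f.
move=> T /col_dependentP [U [U0 UT AU]] TS.
have US := subset_trans UT TS.
have fU : f \in U.
  apply: contraR indepSf => fU; apply: (col_dependentS _ (col_dependent_kernel U0 AU)).
  by rewrite subsetD1 US.
have SU0 : S :\: U = set0.
  apply: contraNeq indepSf => SU0.
  apply: (col_dependentS _ (col_dependent_kernel SU0 _)).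
    apply/subsetP => i; rewrite !inE => /andP [iU ->]; rewrite andbT.
    by apply: contraNneq iU => ->.
  have /eqP US0 : U :\: S == set0 by rewrite setD_eq0.
  by rewrite -[_ :\: U]setU0 -US0 -indicator_cVD mulmxDr AS AU addr0.
apply/eqP; rewrite eqEsubset TS; apply: subset_trans UT.
by rewrite -setD_eq0 SU0.
Qed.

(* f |: (C :\: D) is the symmetric difference of C and D, so its indicator is
   a kernel vector; removing f leaves a proper subset of C. *)
Lemma col_circuits_symdiff C D f :
  C \in col_circuits A -> D \in col_circuits A -> D :\: C = [set f] ->
  C :&: D != set0 -> f |: (C :\: D) \in col_circuits A.
Proof.
move=> circC circD DCf CD0.
have /setDP [_ fC] : f \in D :\: C by rewrite DCf set11.
apply: (col_circuit_of_kernel (setU11 f _)).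
  by rewrite setUC -DCf -indicator_cVD mulmxDr !col_circuit_kernel // addr0.
rewrite setU1K; last by rewrite inE negb_and fC orbT.
apply: col_circuit_proper_indep circC _.
by rewrite setDE properIl // -disjoints_subset -setI_eq0.
Qed.

End ColumnMatroid.

Section TropicalMaximum.
Variable R : realType.
Implicit Types a b c : option R.

Definition trop_lt a b := ~~ trop_le b a.

Lemma trop_le_total a b : trop_le a b || trop_le b a.
Proof. by case: a => [u|]; case: b => [v|] //=; exact: le_total. Qed.

Lemma trop_le_refl a : trop_le a a.
Proof. by case: a => [u|] //=; rewrite lexx. Qed.

Lemma trop_le_trans a b c : trop_le a b -> trop_le b c -> trop_le a c.
Proof. by case: a => [u|]; case: b => [v|]; case: c => [w|] //=; exact: le_trans. Qed.

Lemma trop_le_anti a b : trop_le a b -> trop_le b a -> a = b.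
Proof.
by case: a => [u|]; case: b => [v|] //= uv vu; rewrite (@le_anti _ _ u v) ?uv.
Qed.

Lemma trop_lt_le_trans a b c : trop_lt a b -> trop_le b c -> trop_lt a c.
Proof. by move=> ab bc; apply: contra ab; apply: trop_le_trans. Qed.

Lemma trop_max_seq (T : eqType) (x : T -> option R) (s : seq T) : s != [::] ->
  exists2 e, e \in s & forall k, k \in s -> trop_le (x k) (x e).
Proof.
elim: s => // a s IH _; have [-> | /IH [e es le_e]] := eqVneq s [::].
  by exists a => [|k]; rewrite ?inE // => /eqP ->; rewrite trop_le_refl.
have [ae | ea] := orP (trop_le_total (x a) (x e)).
  by exists e => [|k]; rewrite inE ?es ?orbT // => /orP [/eqP -> | /le_e].
exists a => [|k]; rewrite inE ?eqxx // => /orP [/eqP -> | /le_e ke].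
  exact: trop_le_refl.
exact: trop_le_trans ke ea.
Qed.

Variable n : nat.
Implicit Types (x : 'I_n -> option R) (C D : {set 'I_n}).

Definition unique_argmax C x e :=
  e \in C /\ forall k, k \in C -> k != e -> trop_lt (x k) (x e).

Lemma unique_argmax_notin_V C x e : unique_argmax C x e -> ~ in_V C x.
Proof.
move=> [eC lt_e] [i [j [iC jC ij xij le_i]]].
have [ie | ie] := eqVneq i e.
  by move: (lt_e j jC); rewrite -ie eq_sym ij -xij /trop_lt trop_le_refl => /(_ isT).
by move: (lt_e i iC ie); rewrite /trop_lt le_i.
Qed.

Lemma notin_V_unique_argmax C x :
  C != set0 -> ~ in_V C x -> exists e, unique_argmax C x e.
Proof.
move=> C0 notV.
have [e eC le_e] : exists2 e, e \in C & forall k, k \in C -> trop_le (x k) (x e).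
  have [|e] := trop_max_seq x (s := enum C).
    by case/set0Pn: C0 => i; rewrite -mem_enum; case: (enum C).
  by rewrite mem_enum => eC le_e; exists e => // k kC; apply: le_e; rewrite mem_enum.
exists e; split=> // k kC ke; apply/negP => ek; apply: notV.
by exists e, k; split=> //; [rewrite eq_sym | exact: trop_le_anti ek (le_e k kC)].
Qed.

Lemma unique_argmax_transfer C D x e e' :
  unique_argmax C x e -> e' \in D -> trop_le (x e) (x e') ->
  (forall k, k \in D -> k != e' -> (k \in C /\ k != e) \/ trop_lt (x k) (x e')) ->
  unique_argmax D x e'.
Proof.
move=> [eC lt_e] e'D ee' hD; split=> // k kD ke'.
by case: (hD k kD ke') => // [[kC ke]]; apply: trop_lt_le_trans (lt_e k kC ke) ee'.
Qed.

(* The new unique maximiser is f if x e <= x f, and e otherwise. *)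
Lemma unique_argmax_symdiff C D f x e :
  D :\: C = [set f] -> unique_argmax C x e ->
  (exists e', unique_argmax D x e') \/ (exists e', unique_argmax (f |: (C :\: D)) x e').
Proof.
move=> DCf hCe; have [eC _] := hCe.
have /setDP [fD fC] : f \in D :\: C by rewrite DCf set11.
have inD k : k \in D -> k != f -> k \in C.
  by move=> kD kf; apply: contraR kf => kC; rewrite -in_set1 -DCf inE kC.
have inS k : k \in f |: (C :\: D) -> k != f -> (k \in C) && (k \notin D).
  by rewrite !inE => /orP [-> // | /andP [-> ->]].
have [ef | fe] := boolP (trop_le (x e) (x f)); have [eD | eD] := boolP (e \in D).
- right; exists f; apply: (unique_argmax_transfer hCe (setU11 _ _) ef) => k kS kf.
  by have /andP [kC kD] := inS k kS kf; left; split=> //; apply: contraNneq kD => ->.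
- left; exists f; apply: (unique_argmax_transfer hCe fD ef) => k kD kf.
  by left; split; [apply: inD | apply: contraNneq eD => <-].
- left; exists e; apply: (unique_argmax_transfer hCe eD (trop_le_refl _)) => k kD ke.
  by have [-> | kf] := eqVneq k f; [right | left; split=> //; apply: inD].
- right; exists e; apply: (unique_argmax_transfer hCe _ (trop_le_refl _)) => [|k kS ke].
    by rewrite !inE eC eD orbT.
  by have [-> | kf] := eqVneq k f; [right | left; have /andP [] := inS k kS kf].
Qed.

End TropicalMaximum.

Section EssentialCircuits.
Variables (n : nat) (Cs : {set {set 'I_n}}).
Hypothesis Cs_clutter : forall C D, C \in Cs -> D \in Cs -> C \subset D -> C = D.
Hypothesis Cs_simple : simple Cs.
Hypothesis Cs_symdiff : forall C D f, C \in Cs -> D \in Cs -> D :\: C = [set f] ->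
  C :&: D != set0 -> f |: (C :\: D) \in Cs.

Definition essential_circuits := [set C in Cs | [forall D in Cs, #|D :\: C| != 1%N]].

Lemma essential_circuits_sub : essential_circuits \subset Cs.
Proof. by apply/subsetP => C; rewrite inE => /andP []. Qed.

Lemma circuit_neq0 C : C \in Cs -> C != set0.
Proof. by move/Cs_simple; rewrite -card_gt0; lia. Qed.

Lemma essential_card_setD C D :
  C \in essential_circuits -> D \in Cs -> D != C -> (1 < #|D :\: C|)%N.
Proof.
rewrite inE => /andP [CsC /forall_inP DC1] CsD DC; have := DC1 D CsD.
suff : #|D :\: C| != 0%N by case: #|D :\: C| => [|[|]].
rewrite cards_eq0 setD_eq0; apply: contra DC => DsubC.
by apply/eqP; apply: Cs_clutter.
Qed.

Lemma circuit_symdiff_smaller C D f :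
  C \in Cs -> D \in Cs -> D :\: C = [set f] ->
  [/\ f |: (C :\: D) \in Cs, (#|D| < #|C|)%N & (#|f |: (C :\: D)| < #|C|)%N].
Proof.
move=> CsC CsD DCf.
have /setDP [_ fC] : f \in D :\: C by rewrite DCf set11.
have cardC := cardsID D C; have cardD := cardsID C D.
rewrite DCf cards1 in cardD; have D3 := Cs_simple CsD.
have CD0 : C :&: D != set0 by rewrite -card_gt0 setIC; lia.
have CsS := Cs_symdiff CsC CsD DCf CD0; have S3 := Cs_simple CsS.
have cardS : #|f |: (C :\: D)| = #|C :\: D|.+1.
  by rewrite cardsU1 in_setD (negbTE fC) andbF.
by rewrite setIC in cardC; split=> //; lia.
Qed.

Variable R : realType.

Lemma essential_unique_argmax (x : 'I_n -> option R) C e :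
  C \in Cs -> unique_argmax C x e ->
  exists2 C', C' \in essential_circuits & exists e', unique_argmax C' x e'.
Proof.
have [k] := ubnP #|C|; elim: k C e => // k IH C e ltCk CsC hCe.
have [CE | ] := boolP (C \in essential_circuits); first by exists C; last exists e.
rewrite inE CsC /= negb_forall_in => /existsP [D /andP [CsD /negPn /cards1P [f DCf]]].
have [CsS ltDC ltSC] := circuit_symdiff_smaller CsC CsD DCf.
have [[e' hD] | [e' hS]] := unique_argmax_symdiff DCf hCe.
  by apply: (IH D e' _ CsD hD); lia.
by apply: (IH _ e' _ CsS hS); lia.
Qed.

Lemma essential_tropical_basis : tropical_basis R Cs essential_circuits.
Proof.
split=> [|x _]; first exact: essential_circuits_sub.
split=> [inVE C CsC | inVCs C CE]; last exact/inVCs/(subsetP essential_circuits_sub).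
apply: NNPP => notV.
have [e hCe] := notin_V_unique_argmax (circuit_neq0 CsC) notV.
have [C' C'E [e' hC']] := essential_unique_argmax CsC hCe.
exact: unique_argmax_notin_V hC' (inVE C' C'E).
Qed.

Lemma essential_sub_tropical_basis B :
  tropical_basis R Cs B -> essential_circuits \subset B.
Proof.
move=> [BCs inVB]; apply/subsetP => C CE; apply/negPn/negP => CnB.
have CsC := subsetP essential_circuits_sub C CE.
have [e eC] := set0Pn _ (circuit_neq0 CsC).
pose x k : option R := Some (if k \in C then (k == e)%:R else 2).
have hCe : unique_argmax C x e.
  by split=> // k kC ke; rewrite /trop_lt /x kC eC eqxx (negbTE ke) /= ler10.
have x_in_V D : D \in B -> in_V D x.
  move=> DB; have DC : D != C by apply: contraNneq CnB => <-.
  have := essential_card_setD CE (subsetP BCs D DB) DC.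
  case/card_gt1P => i [j [+ + ij]]; rewrite !inE => /andP [iC iD] /andP [jC jD].
  exists i, j; split=> //; first by rewrite /x (negbTE iC) (negbTE jC).
  move=> k _; rewrite /x (negbTE iC) /=.
  by case: (k \in C) => //; case: (k == e); rewrite ?ler0n ?ler1n.
apply: (unique_argmax_notin_V hCe).
by apply: (inVB x _).1 CsC => //; exists e.
Qed.

End EssentialCircuits.

Lemma least_unique_minimal (T : finType) (P : {set T} -> Prop) (E : {set T}) :
  P E -> (forall B, P B -> E \subset B) ->
  exists! B, P B /\ forall B' : {set T}, B' \proper B -> ~ P B'.
Proof.
move=> PE leastE; exists E; split=> [|B [PB minB]].
  split=> // B' /properP [_ [i iE iB']] /leastE /subsetP /(_ i iE).
  by rewrite (negbTE iB').
apply/eqP; rewrite eqEproper leastE //=; apply/negP => /minB; exact.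
Qed.

Theorem theorem4 (R : realType) (n : nat) (Cs : {set {set 'I_n}}) :
  matroid_circuits Cs -> binary Cs -> simple Cs ->
  exists! B : {set {set 'I_n}}, minimal_tropical_basis R Cs B.
Proof.
move=> [_ Cs_clutter _] [m [A defCs]] Cs_simple.
have Cs_symdiff : forall C D f, C \in Cs -> D \in Cs -> D :\: C = [set f] ->
    C :&: D != set0 -> f |: (C :\: D) \in Cs.
  by rewrite defCs; exact: col_circuits_symdiff.
apply: least_unique_minimal.
  exact: essential_tropical_basis.
exact: essential_sub_tropical_basis.
Qed.
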